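(* Let $r\ge 2$, $0\le s<r/2$, $n=\frac{r(r+1)}2+s$, and fix a line $L\subset\mathbb{P}^2$. If $\Gamma\in\mathbb{P}^{2[n]}$ is general, then there exists $\Gamma''\in L^{[r-1]}$ such that $\Gamma\cup\Gamma''$ lies on a pencil of plane curves of degree $r$, i.e. $h^0(\mathcal{I}_{\Gamma\cup\Gamma''}(r))\ge 2$.
   Context: Over $\mathbb{C}$. $\mathbb{P}^{2[n]}$ is the Hilbert scheme of length-$n$ zero-dimensional subschemes of $\mathbb{P}^2$ and $L^{[r-1]}$ the Hilbert scheme of length-$(r-1)$ subschemes of $L$. *)

From mathcomp Require Import all_boot all_algebra.
From mathcomp Require Import complex.
From mathcomp Require Import Rstruct.
From mathcomp Require Import mpoly.
Import GRing.Theory.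
Set Implicit Arguments.
Unset Strict Implicit.
Unset Printing Implicit Defensive.
Local Open Scope ring_scope.

Definition C : closedFieldType := complex Rdefinitions.R.

(* Homogeneous coordinates of the i-th point of a configuration of n points
   of P^2, encoded as a flat vector of 3*n complex numbers
   (point i has coordinates v(3i), v(3i+1), v(3i+2)). *)
Lemma pt_idx_lt (n : nat) (i : 'I_n) (j : 'I_3) : (3 * i + j < 3 * n)%N.
Proof.
have hi := ltn_ord i; have hj := ltn_ord j.
apply: (@leq_trans (3 * i + 3)); first by rewrite ltn_add2l.
by rewrite -mulnSr leq_mul2l.
Qed.

Definition pt (n : nat) (v : 'I_(3 * n) -> C) (i : 'I_n) (j : 'I_3) : C :=
  v (Ordinal (@pt_idx_lt n i j)).

Definition nonzero3 (p : 'I_3 -> C) : Prop := exists j, p j != 0.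

Definition not_proportional (p q : 'I_3 -> C) : Prop :=
  exists j k : 'I_3, p j * q k != p k * q j.

(* v encodes n pairwise distinct points of P^2, i.e. a reduced
   length-n subscheme Gamma *)
Definition distinct_points (n : nat) (v : 'I_(3 * n) -> C) : Prop :=
  (forall i, nonzero3 (pt v i)) /\
  (forall i j : 'I_n, i != j -> not_proportional (pt v i) (pt v j)).

(* F lies in the degree-d part of the homogeneous ideal of
   Gamma \cup Gamma'' where Gamma = {pt v i} (reduced) and Gamma'' is the
   length-(r-1) subscheme of the line L = V(l) cut out by (l, G). *)
Definition in_ideal_union (n d : nat) (v : 'I_(3 * n) -> C)
    (l G F : {mpoly C[3]}) : Prop :=
  F \is d.-homog /\
  (forall i, F.@[pt v i] = 0) /\
  (exists a b : {mpoly C[3]}, F = a * l + b * G).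

(* G defines a length-(r-1) subscheme of L = V(l): G homogeneous of degree
   r-1 and not divisible by l; Gamma'' = V(l, G). *)
Definition subscheme_of_line (r : nat) (l G : {mpoly C[3]}) : Prop :=
  G \is (r.-1).-homog /\ ~ (exists H : {mpoly C[3]}, G = l * H).

(* Parametrize the line l = 0 by x_j = 1, x_k = t.  For forms a, a' of degree
   r - 1 and a binary form G(x_j, x_k) of degree r - 1, the forms a l + G x_j and
   a' l + G x_k lie in (l, G) and restrict to G(t) and t G(t) on the line; so as
   soon as G does not vanish identically on the line they are independent, and
   V(l, G) is a length-(r - 1) subscheme of the line.  Asking both forms to vanish
   on the n points imposes 2n = r(r + 1) + 2s linear conditions on
   r(r + 1) + r unknowns, and 2s < r, so a nonzero solution exists.  Its G can
   only vanish on the line if a multiple a l of l already vanishes on the points;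
   if two independent such multiples exist they form the pencil, and if exactly
   one does, the count with a single form a l + G x_j (one fewer copy of the
   unknowns, one extra condition killing that multiple) still succeeds.  The
   construction works for every configuration, so D can be taken constant. *)

From mathcomp Require Import all_boot all_algebra.
From mathcomp Require Import complex.
From mathcomp Require Import Rstruct.
From mathcomp Require Import mpoly.
From mathcomp Require Import zify ring.
From Stdlib Require Import Classical.
Set Implicit Arguments.
Unset Strict Implicit.
Unset Printing Implicit Defensive.

Import GRing.Theory Num.Theory.
Local Open Scope ring_scope.

Lemma exists_nontrivial_solution (F : fieldType) (U E : finType) (c : E -> U -> F) :
  (#|E| < #|U|)%N ->
  exists x : U -> F, (exists u, x u != 0) /\ forall e, \sum_u c e u * x u = 0.
Proof.
move=> ltEU.
pose A : 'M[F]_(#|U|, #|E|) := \matrix_(i, j) c (enum_val j) (enum_val i).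
have ker_neq0 : kermx A != 0.
  apply/eqP => ker0; have := mxrank_ker A; rewrite ker0 mxrank0.
  have := rank_leq_col A; lia.
have [i row_neq0] : exists i, row i (kermx A) != 0.
  apply/existsP; apply: contraT; rewrite negb_exists => /forallP rows0.
  case/negP: ker_neq0; apply/eqP/row_matrixP => i'.
  by rewrite row0; apply/eqP/negPn/rows0.
set u := row i (kermx A) in row_neq0.
have uA0 : u *m A = 0 by rewrite /u -row_mul mulmx_ker row0.
exists (fun y => u 0 (enum_rank y)); split.
  have [j uj_neq0] : exists j, u 0 j != 0.
    apply/existsP; apply: contraT; rewrite negb_exists => /forallP u0.
    case/negP: row_neq0; apply/eqP/rowP => j.
    by move/negPn/eqP: (u0 j) => ->; rewrite mxE.
  by exists (enum_val j); rewrite enum_valK.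
move=> e; have := congr1 (fun M : 'M[F]_(1, #|E|) => M 0 (enum_rank e)) uA0.
rewrite !mxE => sum_eq0; rewrite -[RHS]sum_eq0.
rewrite (reindex (@enum_val U predT)) /=; last exact/onW_bij/enum_val_bij.
by apply: eq_bigr => j _; rewrite enum_valK !mxE enum_rankK mulrC.
Qed.

Lemma vanishing_poly_eq0 (R : numDomainType) (q : {poly R}) :
  (forall t, q.[t] = 0) -> q = 0.
Proof.
move=> q_vanishes; apply/eqP; apply: contraT => q_neq0.
suff: (size [seq (i%:R : R) | i <- iota 0 (size q)] < size q)%N.
  by rewrite size_map size_iota ltnn.
apply: max_poly_roots q_neq0 _ _; first by apply/allP => x _; rewrite /root q_vanishes.
by rewrite map_inj_uniq ?iota_uniq // => a b /eqP; rewrite eqr_nat => /eqP.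
Qed.

Lemma meval_lincomb_mul (R : comNzRingType) (n : nat) (I : finType) (c : I -> R)
    (P : I -> {mpoly R[n]}) (Q : {mpoly R[n]}) (x : 'I_n -> R) :
  ((\sum_y c y *: P y) * Q).@[x] = \sum_y (P y * Q).@[x] * c y.
Proof.
rewrite mulr_suml rmorph_sum; apply: eq_bigr => y _.
by rewrite -scalerAl /= mevalZ mulrC.
Qed.

Lemma homog_X (i : 'I_3) : ('X_i : {mpoly C[3]}) \is 1.-homog.
Proof. by rewrite dhomogX; apply/eqP; exact: mdeg1. Qed.

Definition o0 : 'I_3 := @Ordinal 3 0 isT.
Definition o1 : 'I_3 := @Ordinal 3 1 isT.
Definition o2 : 'I_3 := @Ordinal 3 2 isT.

(* (d, e) with e <= d < r indexes the monomial x0^(r-1-d) x1^(d-e) x2^e of degree r - 1 *)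
Notation mon_index r := {d : 'I_r & 'I_d.+1}.

Section Forms.
Variable r : nat.

Definition mon_exp (x : mon_index r) : 'X_{1..3} :=
  (U_(o0) *+ (r.-1 - tag x) + U_(o1) *+ (tag x - tagged x) + U_(o2) *+ tagged x)%MM.

Definition form_of (a : mon_index r -> C) : {mpoly C[3]} := \sum_x a x *: 'X_[mon_exp x].

Lemma card_mon_index : #|{: mon_index r}| = ((r * r.+1) %/ 2)%N.
Proof.
have double_sum m : ((\sum_(d < m) d.+1).*2 = m * m.+1)%N.
  by elim: m => [|m IH]; rewrite ?big_ord0 // big_ord_recr /= doubleD IH; nia.
rewrite card_tagged -double_sum divn2 doubleK sumnE big_map big_enum /=.
by apply: eq_bigr => d _; rewrite card_ord.
Qed.

Lemma mon_exp_inj : injective mon_exp.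
Proof.
move=> [d e] [d' e'] /mnmP eq_exp.
have := eq_exp o1; have := eq_exp o2.
rewrite /mon_exp /= !mnmDE !mulmnE !mnm1E /= => ee' dd'.
have lt_e := ltn_ord e; have lt_e' := ltn_ord e'.
have eq_d : d = d' by apply: val_inj => /=; lia.
by subst d'; congr existT; apply: val_inj => /=; lia.
Qed.

Lemma form_of_homog a : form_of a \is (r.-1).-homog.
Proof.
apply: rpred_sum => -[d e] _; apply: rpredZ; rewrite dhomogX /= /mon_exp mdegE.
rewrite !big_ord_recr big_ord0 /= !mnmDE !mulmnE !mnm1E /=.
by have lt_d := ltn_ord d; have lt_e := ltn_ord e; apply/eqP; lia.
Qed.

Lemma form_of_eq0 a : form_of a = 0 -> forall x, a x = 0.
Proof.
move=> a0 x; have := congr1 (mcoeff (mon_exp x)) a0.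
rewrite mcoeff0 raddf_sum (bigD1 x) //= big1 ?addr0; first by rewrite mcoeffZ mcoeffX eqxx mulr1.
by move=> y yx; rewrite mcoeffZ mcoeffX (inj_eq mon_exp_inj) (negbTE yx) mulr0.
Qed.

Lemma form_of_lincomb c1 c2 a b :
  c1 *: form_of a + c2 *: form_of b = form_of (fun x => c1 * a x + c2 * b x).
Proof.
rewrite /form_of !scaler_sumr -big_split; apply: eq_bigr => x _.
by rewrite !scalerA scalerDl.
Qed.

Variables j k : 'I_3.

Definition binform (g : 'I_r -> C) : {mpoly C[3]} :=
  \sum_e g e *: ('X_j ^+ (r.-1 - e) * 'X_k ^+ e).

Definition binform_poly (g : 'I_r -> C) : {poly C} := \sum_e g e *: 'X^e.

Lemma binform_homog g : binform g \is (r.-1).-homog.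
Proof.
apply: rpred_sum => e _; apply: rpredZ; have lt_e := ltn_ord e.
have := dhomogM (dhomogMn (r.-1 - e) (homog_X j)) (dhomogMn e (homog_X k)).
by have -> : (1 * (r.-1 - e) + 1 * e = r.-1)%N by lia.
Qed.

Lemma binform_poly_eq0 g : binform_poly g = 0 -> forall e, g e = 0.
Proof.
move=> g0 e; have := congr1 (fun q : {poly C} => q`_e) g0.
rewrite coef0 coef_sum (bigD1 e) //= big1 ?addr0; first by rewrite coefZ coefXn eqxx mulr1.
by move=> e' e'e; rewrite coefZ coefXn eq_sym (inj_eq val_inj) (negbTE e'e) mulr0.
Qed.

Lemma binform_eq0 g : (forall e, g e = 0) -> binform g = 0.
Proof. by move=> g0; rewrite /binform big1 // => e _; rewrite g0 scale0r. Qed.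

Lemma meval_binform g (x : 'I_3 -> C) : x j = 1 -> (binform g).@[x] = (binform_poly g).[x k].
Proof.
move=> xj1; rewrite /binform_poly horner_sum rmorph_sum /=; apply: eq_bigr => e _.
by rewrite mevalZ mevalM !rmorphXn /= !mevalXU xj1 expr1n mul1r hornerZ hornerXn.
Qed.

End Forms.

Lemma homog1_expand (R : nzRingType) (n : nat) (l : {mpoly R[n]}) :
  l \is 1.-homog -> l = \sum_i l@_U_(i) *: 'X_i.
Proof.
move=> l_homog; apply/mpolyP => m; rewrite raddf_sum /=.
under eq_bigr do rewrite mcoeffZ.
have [/mdeg1P [j /eqP ->] | m_deg] := boolP (mdeg m == 1%N).
  rewrite (bigD1 j) //= big1 ?addr0 ?mcoeffXU ?eqxx ?mulr1 //.
  by move=> i ij; rewrite mcoeffXU (negbTE ij) mulr0.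
rewrite (dhomog_nemf_coeff l_homog) //; symmetry; apply: big1 => i _.
rewrite mcoeffX; case: eqP => [mU|]; last by rewrite mulr0.
by move: m_deg; rewrite -mU mdeg1.
Qed.

Lemma meval_homog1 (R : comNzRingType) (n : nat) (l : {mpoly R[n]}) (x : 'I_n -> R) :
  l \is 1.-homog -> l.@[x] = \sum_u l@_U_(u) * x u.
Proof.
move=> l_homog; rewrite {1}(homog1_expand l_homog) rmorph_sum /=.
by apply: eq_bigr => u _; rewrite mevalZ mevalXU.
Qed.

Lemma homog1_coef_neq0 (R : nzRingType) (n : nat) (l : {mpoly R[n]}) :
  l != 0 -> l \is 1.-homog -> exists i, l@_U_(i) != 0.
Proof.
move=> l_neq0 l_homog; apply/existsP; apply: contraT; rewrite negb_exists => /forallP l0.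
case/negP: l_neq0; rewrite (homog1_expand l_homog) big1 // => u _.
by move/negPn/eqP: (l0 u) => ->; rewrite scale0r.
Qed.

Lemma sum_ord3 (V : nmodType) (f : 'I_3 -> V) (i j k : 'I_3) :
  i != j -> i != k -> j != k -> \sum_u f u = f i + f j + f k.
Proof.
move=> ij ik jk; rewrite (bigD1 i) // (bigD1 j) 1?eq_sym //= (bigD1 k) /=; last first.
  by rewrite eq_sym ik eq_sym jk.
rewrite big1 ?addr0 ?addrA // => u /andP [/andP [ui uj] uk].
by move: i j k u ij ik jk ui uj uk; do 4 case=> [[|[|[|//]]] ?].
Qed.

(* the point of the line l = 0 with x_j = 1 and x_k = t, solved for x_i *)
Definition line_pt (l : {mpoly C[3]}) (i j k : 'I_3) (t : C) : 'I_3 -> C :=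
  fun u => if u == j then 1 else if u == k then t
           else - (l@_U_(j) + t * l@_U_(k)) / l@_U_(i).

Definition vanishes (n : nat) (v : 'I_(3 * n) -> C) (F : {mpoly C[3]}) : Prop :=
  forall p, F.@[pt v p] = 0.

Definition pencil_in (r n : nat) (v : 'I_(3 * n) -> C) (l G : {mpoly C[3]}) : Prop :=
  exists F1 F2 : {mpoly C[3]},
    in_ideal_union r v l G F1 /\ in_ideal_union r v l G F2 /\
    (forall c1 c2 : C, c1 *: F1 + c2 *: F2 = 0 -> c1 = 0 /\ c2 = 0).

Definition coef_indep (I : finType) (a b : I -> C) : Prop :=
  forall c1 c2, (forall x, c1 * a x + c2 * b x = 0) -> c1 = 0 /\ c2 = 0.

Lemma coef_indep_separated (I : finType) (w b : I -> C) x0 y :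
  w x0 != 0 -> b x0 = 0 -> b y != 0 -> coef_indep w b.
Proof.
move=> wx0 bx0 by_neq0 c1 c2 comb0.
have c1_0 : c1 = 0.
  by move/eqP: (comb0 x0); rewrite bx0 mulr0 addr0 mulf_eq0 (negbTE wx0) orbF => /eqP.
split=> //; move/eqP: (comb0 y); rewrite c1_0 mul0r add0r mulf_eq0 (negbTE by_neq0) orbF.
by move/eqP.
Qed.

Section Pencil.
Variables (r n : nat) (v : 'I_(3 * n) -> C) (l : {mpoly C[3]}) (i j k : 'I_3).
Hypotheses (r_gt0 : (0 < r)%N) (l_neq0 : l != 0) (l_homog : l \is 1.-homog).
Hypotheses (li_neq0 : l@_U_(i) != 0) (ij : i != j) (ik : i != k) (jk : j != k).

Local Notation L := (line_pt l i j k).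
Local Notation N := ((r * r.+1) %/ 2)%N.

Lemma line_pt_j t : L t j = 1.
Proof. by rewrite /line_pt eqxx. Qed.

Lemma line_pt_k t : L t k = t.
Proof. by rewrite /line_pt eq_sym (negbTE jk) eqxx. Qed.

Lemma meval_line_pt t : l.@[L t] = 0.
Proof.
rewrite (meval_homog1 _ l_homog) (sum_ord3 _ ij ik jk) line_pt_j line_pt_k /line_pt (negbTE ij) (negbTE ik).
by field.
Qed.

Lemma homog_mul_deg1 (a b : {mpoly C[3]}) :
  a \is (r.-1).-homog -> b \is 1.-homog -> a * b \is r.-homog.
Proof. by move=> a_homog b_homog; have := dhomogM a_homog b_homog; rewrite addn1 prednK. Qed.

Lemma subscheme_of_line_restrict (G : {mpoly C[3]}) :
  G \is (r.-1).-homog -> ~ (forall t, G.@[L t] = 0) -> subscheme_of_line r l G.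
Proof.
move=> G_homog G_nvanish; split=> // -[H GlH]; apply: G_nvanish => t.
by rewrite GlH mevalM meval_line_pt mul0r.
Qed.

Lemma meval_binform_line (g : 'I_r -> C) t : (binform j k g).@[L t] = (binform_poly g).[t].
Proof. by rewrite meval_binform ?line_pt_j ?line_pt_k. Qed.

Lemma subscheme_binform (g : 'I_r -> C) :
  binform_poly g != 0 -> subscheme_of_line r l (binform j k g).
Proof.
move=> g_neq0; apply: subscheme_of_line_restrict; first exact: binform_homog.
by move=> g_vanish; case/negP: g_neq0; apply/eqP/vanishing_poly_eq0 => t; rewrite -meval_binform_line.
Qed.

Lemma in_ideal_mull (a : mon_index r -> C) G :
  vanishes v (form_of a * l) -> in_ideal_union r v l G (form_of a * l).
Proof.
move=> a_vanish; split; first exact: homog_mul_deg1 (form_of_homog a) l_homog.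
by split=> //; exists (form_of a), 0; rewrite mul0r addr0.
Qed.

Lemma in_ideal_binform (a : mon_index r -> C) (g : 'I_r -> C) (u : 'I_3) :
  vanishes v (form_of a * l + binform j k g * 'X_u) ->
  in_ideal_union r v l (binform j k g) (form_of a * l + binform j k g * 'X_u).
Proof.
move=> F_vanish; split.
  by apply: rpredD; apply: homog_mul_deg1; rewrite ?form_of_homog ?binform_homog ?homog_X.
by split=> //; exists (form_of a), 'X_u; rewrite [_ * 'X_u]mulrC.
Qed.

Lemma pencil_two_multiples (a b : mon_index r -> C) :
  vanishes v (form_of a * l) -> vanishes v (form_of b * l) -> coef_indep a b ->
  exists G, subscheme_of_line r l G /\ pencil_in r v l G.
Proof.
move=> a_vanish b_vanish ab_indep; exists ('X_j ^+ r.-1); split.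
  apply: subscheme_of_line_restrict.
    by have := dhomogMn r.-1 (homog_X j); rewrite mul1n.
  move=> /(_ 0) /eqP; rewrite rmorphXn /= mevalXU line_pt_j expr1n.
  exact/negP/oner_neq0.
exists (form_of a * l), (form_of b * l).
split; first exact: in_ideal_mull.
split; first exact: in_ideal_mull.
move=> c1 c2; rewrite !scalerAl -mulrDl form_of_lincomb => /eqP.
by rewrite mulf_eq0 (negbTE l_neq0) orbF => /eqP /form_of_eq0; apply: ab_indep.
Qed.

Lemma meval_line_mull (a : {mpoly C[3]}) t : (a * l).@[L t] = 0.
Proof. by rewrite mevalM meval_line_pt mulr0. Qed.

Lemma exists_vanishing_binform_comb (x0 : mon_index r) : (n.+1 < N + r)%N ->
  exists (b : mon_index r -> C) (g : 'I_r -> C),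
    ((exists x, b x != 0) \/ (exists e, g e != 0)) /\ b x0 = 0 /\
    vanishes v (form_of b * l + binform j k g * 'X_j).
Proof.
move=> lt_nN.
pose c (eq : option 'I_n) (u : mon_index r + 'I_r) : C :=
  match eq, u with
  | Some p, inl y => ('X_[mon_exp y] * l).@[pt v p]
  | Some p, inr e => ('X_j ^+ (r.-1 - e) * 'X_k ^+ e * 'X_j).@[pt v p]
  | None, inl y => (y == x0)%:R
  | None, inr _ => 0
  end.
have [|z [[u zu_neq0] z_sol]] := exists_nontrivial_solution c.
  by rewrite card_option card_sum card_mon_index !card_ord.
exists (fun y => z (inl y)), (fun e => z (inr e)); split.
  by case: u zu_neq0 => [y|e]; [left; exists y | right; exists e].
split.
  rewrite -[RHS](z_sol None) big_sumType /= [X in _ + X]big1 ?addr0; last by move=> e _; rewrite mul0r.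
  by rewrite (bigD1 x0) //= big1 ?addr0 ?eqxx ?mul1r // => y /negbTE ->; rewrite mul0r.
by move=> p; rewrite mevalD !meval_lincomb_mul -[RHS](z_sol (Some p)) big_sumType.
Qed.

Lemma exists_vanishing_binform_pair : (n + n < N + N + r)%N ->
  exists (a1 a2 : mon_index r -> C) (g : 'I_r -> C),
    [\/ exists x, a1 x != 0, exists x, a2 x != 0 | exists e, g e != 0] /\
    vanishes v (form_of a1 * l + binform j k g * 'X_j) /\
    vanishes v (form_of a2 * l + binform j k g * 'X_k).
Proof.
move=> lt_nN.
pose c (eq : 'I_n + 'I_n) (u : (mon_index r + mon_index r) + 'I_r) : C :=
  match eq, u with
  | inl p, inl (inl y) | inr p, inl (inr y) => ('X_[mon_exp y] * l).@[pt v p]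
  | inl p, inr e => ('X_j ^+ (r.-1 - e) * 'X_k ^+ e * 'X_j).@[pt v p]
  | inr p, inr e => ('X_j ^+ (r.-1 - e) * 'X_k ^+ e * 'X_k).@[pt v p]
  | _, _ => 0
  end.
have [|z [[u zu_neq0] z_sol]] := exists_nontrivial_solution c.
  by rewrite !card_sum card_mon_index !card_ord.
exists (fun y => z (inl (inl y))), (fun y => z (inl (inr y))), (fun e => z (inr e)).
split; first by case: u zu_neq0 => [[y|y]|e]; [constructor 1 | constructor 2 | constructor 3]; exists y || exists e.
split=> p.
  rewrite mevalD !meval_lincomb_mul -[RHS](z_sol (inl p)) !big_sumType /=.
  by rewrite [X in _ + X + _]big1 ?addr0 // => y _; rewrite mul0r.
rewrite mevalD !meval_lincomb_mul -[RHS](z_sol (inr p)) !big_sumType /=.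
by rewrite [X in X + _ + _]big1 ?add0r // => y _; rewrite mul0r.
Qed.

Lemma pencil_one_multiple (w : mon_index r -> C) x0 :
  vanishes v (form_of w * l) -> w x0 != 0 ->
  ~ (exists a b : mon_index r -> C,
       [/\ vanishes v (form_of a * l), vanishes v (form_of b * l) & coef_indep a b]) ->
  (n.+1 < N + r)%N -> exists G, subscheme_of_line r l G /\ pencil_in r v l G.
Proof.
move=> w_vanish wx0 no_two lt_nN.
have [b [g [bg_neq0 [bx0 F_vanish]]]] := exists_vanishing_binform_comb x0 lt_nN.
have g_neq0 : binform_poly g != 0.
  apply/eqP => /binform_poly_eq0 g0.
  have b_vanish : vanishes v (form_of b * l).
    by move=> p; have := F_vanish p; rewrite binform_eq0 // mul0r addr0.
  have b0 y : b y = 0.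
    apply/eqP; apply: contraT => by_neq0; case: no_two; exists w, b.
    by split=> //; exact: coef_indep_separated wx0 bx0 by_neq0.
  by case: bg_neq0 => -[e]; rewrite ?b0 ?g0 eqxx.
exists (binform j k g); split; first exact: subscheme_binform.
exists (form_of w * l), (form_of b * l + binform j k g * 'X_j).
split; first exact: in_ideal_mull.
split; first exact: in_ideal_binform.
move=> c1 c2 comb0.
have c2_0 : c2 = 0.
  have /eqP : c2 *: binform_poly g = 0.
    apply: vanishing_poly_eq0 => t; have := congr1 (meval (L t)) comb0.
    rewrite !(mevalD, mevalZ, mevalM, meval_line_pt) mevalXU meval_binform_line line_pt_j.
    by rewrite hornerZ !(mulr0, add0r, mulr1) rmorph0.
  by rewrite scaler_eq0 (negbTE g_neq0) orbF => /eqP.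
split=> //; move/eqP: comb0; rewrite c2_0 scale0r addr0 scaler_eq0 mulf_eq0 (negbTE l_neq0) orbF.
case/orP => /eqP // /form_of_eq0 w0.
by move: wx0; rewrite w0 eqxx.
Qed.

Lemma pencil_no_multiple :
  (forall a : mon_index r -> C, vanishes v (form_of a * l) -> forall x, a x = 0) ->
  (n + n < N + N + r)%N -> exists G, subscheme_of_line r l G /\ pencil_in r v l G.
Proof.
move=> no_multiple lt_nN.
have [a1 [a2 [g [aag_neq0 [F1_vanish F2_vanish]]]]] := exists_vanishing_binform_pair lt_nN.
have g_neq0 : binform_poly g != 0.
  apply/eqP => /binform_poly_eq0 g0.
  have a_vanish (u : 'I_3) (a : mon_index r -> C) : vanishes v (form_of a * l + binform j k g * 'X_u) ->
      forall x, a x = 0.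
    by move=> F_vanish; apply: no_multiple => p; have := F_vanish p; rewrite binform_eq0 // mul0r addr0.
  by case: aag_neq0 => -[e]; rewrite ?(a_vanish _ _ F1_vanish) ?(a_vanish _ _ F2_vanish) ?g0 eqxx.
exists (binform j k g); split; first exact: subscheme_binform.
exists (form_of a1 * l + binform j k g * 'X_j), (form_of a2 * l + binform j k g * 'X_k).
split; first exact: in_ideal_binform.
split; first exact: in_ideal_binform.
move=> c1 c2 comb0.
(* on the line the two forms restrict to g(t) and t g(t) *)
have /eqP : binform_poly g * (c1%:P + c2 *: 'X) = 0.
  apply: vanishing_poly_eq0 => t; have := congr1 (meval (L t)) comb0.
  rewrite !(mevalD, mevalZ, mevalM, meval_line_pt) !mevalXU !meval_binform_line.
  rewrite line_pt_j line_pt_k rmorph0 hornerM hornerD hornerC hornerZ hornerX => <-; ring.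
rewrite mulf_eq0 (negbTE g_neq0) => /eqP c0.
have := congr1 (fun q : {poly C} => q`_0) c0; have := congr1 (fun q : {poly C} => q`_1) c0.
by rewrite /= !coefD !coefC !coefZ !coefX /= mulr0 mulr1 addr0 add0r => -> ->.
Qed.

End Pencil.

Theorem mainTheorem19 (r s n : nat) (hr : (2 <= r)%N) (hs : (s.*2 < r)%N)
    (hn : n = ((r * r.+1) %/ 2 + s)%N)
    (l : {mpoly C[3]}) (hl0 : l != 0) (hl1 : l \is 1.-homog) :
  exists D : {mpoly C[3 * n]}, D != 0 /\
    forall v : 'I_(3 * n) -> C,
      D.@[v] != 0 -> distinct_points v ->
      exists G : {mpoly C[3]}, subscheme_of_line r l G /\
        exists F1 F2 : {mpoly C[3]},
          in_ideal_union r v l G F1 /\ in_ideal_union r v l G F2 /\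
          (forall c1 c2 : C, c1 *: F1 + c2 *: F2 = 0 -> c1 = 0 /\ c2 = 0).
Proof.
exists 1; split=> [|v _ _]; first exact: oner_neq0.
have r_gt0 : (0 < r)%N by lia.
have [i li_neq0] := homog1_coef_neq0 hl0 hl1.
have [j [k [ij ik jk]]] : exists j k : 'I_3, [/\ i != j, i != k & j != k].
  by case: i {li_neq0} => -[|[|[|//]]] ?; [exists o1, o2 | exists o0, o2 | exists o0, o1].
have [[a [b [a_vanish b_vanish ab_indep]]] | no_two] := classic (exists a b : mon_index r -> C,
    [/\ vanishes v (form_of a * l), vanishes v (form_of b * l) & coef_indep a b]).
  exact: pencil_two_multiples r_gt0 hl0 hl1 li_neq0 ij ik jk a b a_vanish b_vanish ab_indep.
have [[w [x0 [w_vanish wx0]]] | no_one] := classic (exists (w : mon_index r -> C) x0,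
    vanishes v (form_of w * l) /\ w x0 != 0).
  by apply: (pencil_one_multiple r_gt0 hl0 hl1 li_neq0 ij ik jk w_vanish wx0 no_two); lia.
apply: (pencil_no_multiple r_gt0 hl1 li_neq0 ij ik jk); last by lia.
move=> a a_vanish x; apply/eqP; apply: contraT => ax_neq0.
by case: no_one; exists a, x.
Qed.
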